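(* Let $\alpha\ge1$ be an integer and $0<\eta_1<\dots<\eta_\alpha<1$. Let $r_y$ be the rank function on $[-D,D]$ with thresholds $q_j=\eta_jD$ ($j=1,\dots,\alpha$), and let $r_z$ be the rank function on $[-2V,2V]$ with thresholds $q_j=\eta_j\xi V$ ($j=1,\dots,\alpha$) and $q_{\alpha+1}=\xi V$ (so $z$ has $\beta=\alpha+1$ thresholds). For $\mathbf{x}_1,\mathbf{x}_2\in S$ let $y=f(\mathbf{x}_1)-f(\mathbf{x}_2)$, $z=\theta(\mathbf{x}_1)-\theta(\mathbf{x}_2)$, $\varphi=r_y(y)+r_z(z)$, and $e=\xi V/D$. Then for all $\mathbf{x}_1,\mathbf{x}_2\in S$: (i) if $\varphi<0$ then $\pi(\mathbf{x}_1)>\pi(\mathbf{x}_2)$; (ii) if $\varphi>0$ then $\pi(\mathbf{x}_1)<\pi(\mathbf{x}_2)$; (iii) if $\varphi=0$ and $z=-ey$ then $\pi(\mathbf{x}_1)=\pi(\mathbf{x}_2)$; (iv) if $\varphi=0$ and $z<-ey$ then $\pi(\mathbf{x}_1)>\pi(\mathbf{x}_2)$; (v) if $\varphi=0$ and $z>-ey$ then $\pi(\mathbf{x}_1)<\pi(\mathbf{x}_2)$.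
   Context: Let $S\subset\mathbb{R}^k$ be a compact box, $f,g_1,\dots,g_m,h_{m+1},\dots,h_n:S\to\mathbb{R}$ continuous, $\delta>0$. Put $v_i(\mathbf{x})=\max\{g_i(\mathbf{x}),0\}$ ($i\le m$), $v_i(\mathbf{x})=\max\{|h_i(\mathbf{x})|-\delta,0\}$ ($m<i\le n$), $\vartheta(\mathbf{x})=\sum_{i=1}^n v_i(\mathbf{x})$; $\mathbf{x}$ is feasible iff $\vartheta(\mathbf{x})=0$. Let $D=\max_S f-\min_S f$ and $V=\max_S\vartheta$, and assume $D>0$, $V>0$. Define $\theta(\mathbf{x})=-V$ if $\vartheta(\mathbf{x})=0$ and $\theta(\mathbf{x})=\vartheta(\mathbf{x})$ otherwise. Let $\rho(\mathbf{x})=\#\{i: v_i(\mathbf{x})>0\}$ and $\mathbb{I}(\rho(\mathbf{x})>0)$ be $1$ if $\rho(\mathbf{x})>0$ and $0$ otherwise. Fix $0<\xi\le 1$ and define $\sigma(\mathbf{x})=\mathbb{I}(\rho(\mathbf{x})>0)\,D+\frac{D}{\xi V}\theta(\mathbf{x})$, $\pi(\mathbf{x})=-(f(\mathbf{x})+\sigma(\mathbf{x}))$. Rank function: given $b>0$ and thresholds $0<q_1<\dots<q_a<b$, set $q_0=0$, $q_{a+1}=b$ and define $r:[-b,b]\to\mathbb{Z}$ by $r(0)=0$; $r(\Delta)=j$ if $q_{j-1}<\Delta\le q_j$ ($1\le j\le a+1$); $r(\Delta)=-j$ if $-q_j\le\Delta<-q_{j-1}$ ($1\le j\le a+1$). 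*)

From HB Require Import structures.
From mathcomp Require Import all_boot all_order all_algebra.
From mathcomp Require Import all_classical all_reals all_analysis.
Set Implicit Arguments. Unset Strict Implicit. Unset Printing Implicit Defensive.
Import Order.TTheory GRing.Theory Num.Theory.
Local Open Scope classical_set_scope.
Local Open Scope ring_scope.

Section Defs.
Variable R : realType.

Definition box (k : nat) (lo hi : 'I_k -> R) : set 'rV[R]_k :=
  [set x | forall i : 'I_k, lo i <= x ord0 i <= hi i].

(* max_S F and min_S F (attained since S is compact and F continuous) *)
Definition maxS (T : Type) (S : set T) (F : T -> R) : R := sup (F @` S).
Definition minS (T : Type) (S : set T) (F : T -> R) : R := inf (F @` S).

Definition vineq (T : Type) (gi : T -> R) (x : T) : R := Num.max (gi x) 0.
Definition veq (T : Type) (delta : R) (hi : T -> R) (x : T) : R :=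
  Num.max (`|hi x| - delta) 0.

(* vartheta(x) = sum of all violations; the m inequality constraints are g : 'I_m,
   the n - m equality constraints are h : 'I_p (p = n - m) *)
Definition vtheta (T : Type) (m p : nat) (g : 'I_m -> T -> R) (h : 'I_p -> T -> R)
  (delta : R) (x : T) : R :=
  \sum_(i < m) vineq (g i) x + \sum_(j < p) veq delta (h j) x.

Definition rho (T : Type) (m p : nat) (g : 'I_m -> T -> R) (h : 'I_p -> T -> R)
  (delta : R) (x : T) : nat :=
  (#|[set i : 'I_m | (0 < vineq (g i) x)%R]| + #|[set j : 'I_p | (0 < veq delta (h j) x)%R]|)%N.

Definition theta (T : Type) (V : R) (vt : T -> R) (x : T) : R :=
  if vt x == 0 then - V else vt x.

Definition sigma (T : Type) (m p : nat) (g : 'I_m -> T -> R) (h : 'I_p -> T -> R)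
  (delta D V xi : R) (x : T) : R :=
  (if (0 < rho g h delta x)%N then D else 0)
  + D / (xi * V) * theta V (vtheta g h delta) x.

Definition pi_fun (T : Type) (f : T -> R) (m p : nat) (g : 'I_m -> T -> R)
  (h : 'I_p -> T -> R) (delta D V xi : R) (x : T) : R :=
  - (f x + sigma g h delta D V xi x).

Definition qext (b : R) (a : nat) (q : nat -> R) (j : nat) : R :=
  if j == 0%N then 0 else if j == a.+1 then b else q j.

(* r : [-b,b] -> Z is the rank function with thresholds q_1 < ... < q_a
   (the values of r outside [-b,b] are irrelevant) *)
Definition rank_fun (b : R) (a : nat) (q : nat -> R) (r : R -> int) : Prop :=
  r 0 = 0 /\
  forall (j : nat) (d : R), (1 <= j <= a.+1)%N ->
    (qext b a q j.-1 < d <= qext b a q j -> r d = j%:Z) /\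
    (- qext b a q j <= d < - qext b a q j.-1 -> r d = - (j%:Z)).

End Defs.

From HB Require Import structures.
From mathcomp Require Import all_boot all_order all_algebra.
From mathcomp Require Import all_classical all_reals all_analysis.
From mathcomp Require Import zify ring lra.
Import Order.TTheory GRing.Theory Num.Theory numFieldNormedType.Exports.
Local Open Scope classical_set_scope.
Local Open Scope ring_scope.
Set Implicit Arguments. Unset Strict Implicit. Unset Printing Implicit Defensive.

(* The rank function with thresholds 0 = q_0 < q_1 < ... < q_(a+1) agrees on [-b, b]
   with the signed count of thresholds strictly between 0 and its argument; this count
   is nondecreasing and odd, so a negative (positive) sum of two ranks forces a
   negative (positive) sum of the arguments.  Multiplying by e = xi V / D sends the
   thresholds of y onto the first thresholds of z, so r_y(y) is the count of e y.
   Up to the positive factor D / (xi V), pi(x1) - pi(x2) is -(e y + z + (I1 - I2) xi V),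
   I being the indicator of infeasibility.  If x1 and x2 are both feasible or both
   infeasible the indicators cancel and everything is decided by e y + z; otherwise
   |z| > xi V puts z in the outermost band of r_z, whose rank +-(alpha + 2) outweighs
   |r_y(y)| <= alpha + 1, and the indicator term has the same sign. *)

Section RankCount.
Variables (R : realDomainType) (Q : nat -> R) (a : nat).

Definition rank_count (d : R) : int :=
  (\sum_(j < a.+1) nat_of_bool (Q j < d)%R)%:Z
  - (\sum_(j < a.+1) nat_of_bool (d < - Q j)%R)%:Z.

Lemma rank_countN d : rank_count (- d) = - rank_count d.
Proof.
rewrite /rank_count opprB; congr (_%:Z - _%:Z); apply: eq_bigr => j _.
  by rewrite ltrNr.
by rewrite ltrN2.
Qed.

Lemma le_rank_count : {homo rank_count : u w / u <= w}.
Proof.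
move=> u w uw; rewrite lerB // lez_nat; apply: leq_sum => j _.
  by case: ltP => //= /lt_le_trans ->.
by case: (ltP w) => //= /(le_lt_trans uw) ->.
Qed.

Lemma rank_count_bounded d : - (a.+1)%:Z <= rank_count d <= (a.+1)%:Z.
Proof.
have sum_le (b : 'I_a.+1 -> bool) : (\sum_(j < a.+1) b j <= a.+1)%N.
  by rewrite -[leqRHS]card_ord -sum1_card leq_sum // => j; case: (b j).
have := sum_le (fun j => Q j < d); have := sum_le (fun j => d < - Q j).
by rewrite /rank_count; lia.
Qed.

Lemma rank_count_addr_lt0 u v : rank_count u + rank_count v < 0 -> u + v < 0.
Proof.
apply: contraTT; rewrite -!leNgt addrC -lerBlDr sub0r => /le_rank_count.
by rewrite rank_countN; lia.
Qed.

Lemma rank_count_addr_gt0 u v : 0 < rank_count u + rank_count v -> 0 < u + v.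
Proof.
move=> uv_gt0; rewrite -oppr_lt0 opprD rank_count_addr_lt0 //.
by rewrite !rank_countN; lia.
Qed.

End RankCount.

Section RankCountTheory.
Variable R : realDomainType.
Implicit Types (Q : nat -> R) (a : nat) (d : R).

Lemma eq_rank_count Q1 Q2 a : (forall j, (j <= a)%N -> Q1 j = Q2 j) ->
  rank_count Q1 a =1 rank_count Q2 a.
Proof.
move=> Q12 d; rewrite /rank_count.
by congr (_%:Z - _%:Z); apply: eq_bigr => j _; rewrite Q12 // -ltnS.
Qed.

Lemma rank_countZ Q a e d : 0 < e ->
  rank_count (fun j => e * Q j) a (e * d) = rank_count Q a d.
Proof.
move=> e0; rewrite /rank_count.
by congr (_%:Z - _%:Z); apply: eq_bigr => j _; rewrite -?mulrN ltr_pM2l.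
Qed.

Lemma rank_count_recr Q a d : - Q a.+1 <= d <= Q a.+1 ->
  rank_count Q a.+1 d = rank_count Q a d.
Proof.
case/andP=> lod dhi; rewrite /rank_count !(big_ord_recr a.+1) /=.
by rewrite ltNge dhi ltNge lod !addn0.
Qed.

Lemma rank_count0 Q a : (forall j, (j <= a)%N -> 0 <= Q j) -> rank_count Q a 0 = 0.
Proof.
move=> Q_ge0; rewrite /rank_count !big1 // => j _;
  by rewrite ltNge ?oppr_le0 Q_ge0 ?leq_ord.
Qed.

Lemma threshold_band Q n d : Q 0%N < d <= Q n ->
  exists2 j, (0 < j <= n)%N & Q j.-1 < d <= Q j.
Proof.
case/andP=> lod dhi; have ex : exists j, d <= Q j by exists n.
case: (ex_minnP ex) => j dj jmin; exists j.
  rewrite jmin // andbT lt0n; apply: contraTneq dj => ->; by rewrite -ltNge.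
rewrite dj andbT ltNge; apply/negP => /jmin.
by case: j dj {jmin} => [dj _|j _ /=]; [move: lod; rewrite ltNge dj | rewrite ltnn].
Qed.

End RankCountTheory.

Lemma sum_ord_ltn m n : (\sum_(i < n) (i < m)%N = minn m n)%N.
Proof.
elim: n => [|n IHn]; first by rewrite big_ord0 minn0.
by rewrite big_ord_recr /= IHn; case: ltnP => /= ?; lia.
Qed.

Section RankCountBand.
Variables (R : realDomainType) (Q : nat -> R) (a : nat).
Hypotheses (Q0 : Q 0%N = 0) (Q_incr : forall j, (j < a.+1)%N -> Q j < Q j.+1).

Lemma le_thresholds :
  {in [pred j | (j <= a.+1)%N] &, {mono Q : i j / (i <= j)%N >-> i <= j}}.
Proof.
apply: Order.NatMonotonyTheory.incn_inP => [i j + + k|i _]; rewrite !inE.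
  by rewrite !ltEnat /=; lia.
exact: Q_incr.
Qed.

Lemma thresholds_ge0 j : (j <= a.+1)%N -> 0 <= Q j.
Proof. by move=> ja; rewrite -Q0 le_thresholds ?inE. Qed.

Lemma rank_count_band j d : (0 < j <= a.+1)%N -> Q j.-1 < d <= Q j ->
  rank_count Q a d = j%:Z.
Proof.
move=> /andP[j_gt0 j_le] /andP[lod dhi].
have d_gt0 : 0 < d by apply: le_lt_trans lod; apply: thresholds_ge0; lia.
rewrite /rank_count [X in _ - X%:Z]big1 => [|i _]; last first.
  by rewrite ltNge (le_trans _ (ltW d_gt0)) // oppr_le0 thresholds_ge0 // ltnW.
rewrite (eq_bigr (fun i : 'I_a.+1 => nat_of_bool (i < j)%N)) => [|i _].
  by rewrite sum_ord_ltn subr0 (minn_idPl j_le).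
congr nat_of_bool; apply/idP/idP => [Qid|ij].
  rewrite ltnNge; apply: contraTN Qid => ji.
  by rewrite -leNgt (le_trans dhi) // le_thresholds ?inE // ltnW.
by apply: le_lt_trans lod; rewrite le_thresholds ?inE; lia.
Qed.

End RankCountBand.

Section Thresholds.
Variables (R : realType) (b : R) (a : nat) (q : nat -> R).

Lemma qext0 : qext b a q 0%N = 0.
Proof. by []. Qed.

Lemma qext_last : qext b a q a.+1 = b.
Proof. by rewrite /qext eqxx. Qed.

Lemma qextE j : (0 < j <= a)%N -> qext b a q j = q j.
Proof. by move=> ja; rewrite /qext ifF ?ifF //; apply/eqP; lia. Qed.

Lemma rank_fun_count r : rank_fun b a q r ->
  (forall j, (j < a.+1)%N -> qext b a q j < qext b a q j.+1) ->
  forall d, - b <= d <= b -> r d = rank_count (qext b a q) a d.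
Proof.
move=> [r0 r_band] Q_incr d /andP[lod dhi].
have Q0 := qext0; have Q_ge0 := thresholds_ge0 Q0 Q_incr.
case: (ltgtP d 0) => [d_lt0|d_gt0|->]; last by rewrite r0 rank_count0 // => j /leqW /Q_ge0.
- have [|j ja /andP[lo hi]] := @threshold_band _ (qext b a q) a.+1 (- d).
    by rewrite Q0 qext_last oppr_gt0 d_lt0 lerNl.
  rewrite -[d]opprK rank_countN (rank_count_band Q0 Q_incr ja) ?lo ?hi //.
  by rewrite ((r_band j _ ja).2) // lerN2 ltrN2 hi lo.
- have [|j ja dj] := @threshold_band _ (qext b a q) a.+1 d.
    by rewrite Q0 qext_last d_gt0.
  by rewrite ((r_band j d ja).1 dj) (rank_count_band Q0 Q_incr ja dj).
Qed.

End Thresholds.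

Lemma scaled_thresholds_increasing (R : realDomainType) (Q eta : nat -> R) c a :
  0 < c -> (1 <= a)%N -> Q 0%N = 0 ->
  (forall j, (1 <= j <= a)%N -> Q j = eta j * c) -> Q a.+1 = c ->
  0 < eta 1%N -> (forall j, (1 <= j < a)%N -> eta j < eta j.+1) -> eta a < 1 ->
  forall j, (j < a.+1)%N -> Q j < Q j.+1.
Proof.
move=> c_gt0 a_gt0 Q0 QE Qlast eta1_gt0 eta_incr eta_lt1 [|j] ja.
  by rewrite Q0 QE ?a_gt0 // mulr_gt0.
case: (ltngtP j.+1 a) => [j_lt|j_gt|j_eq].
- by rewrite !QE ?j_lt ?(ltnW j_lt) // ltr_pM2r // eta_incr.
- by move: ja; rewrite ltnS leqNgt j_gt.
by rewrite j_eq Qlast QE ?a_gt0 ?leqnn // gtr_pMl.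
Qed.

Section EtaThresholds.
Variables (R : realType) (V c : R) (alpha : nat) (eta : nat -> R).
Local Notation Qz :=
  (qext (2 * V) alpha.+1 (fun j => if j == alpha.+1 then c else eta j * c)).

Lemma eta_thresholdsE j : (1 <= j <= alpha)%N -> Qz j = eta j * c.
Proof.
move=> /andP[j_gt0 j_le]; rewrite qextE ?j_gt0 ?(leqW j_le) //.
by rewrite (ltn_eqF (j_le : (j < alpha.+1)%N)).
Qed.

Lemma eta_thresholds_last : Qz alpha.+1 = c.
Proof. by rewrite qextE ?leqnn // eqxx. Qed.

Lemma eta_thresholds_increasing : 0 < c -> c < 2 * V -> (1 <= alpha)%N ->
  0 < eta 1%N -> (forall j, (1 <= j < alpha)%N -> eta j < eta j.+1) -> eta alpha < 1 ->
  forall j, (j < alpha.+2)%N -> Qz j < Qz j.+1.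
Proof.
move=> c_gt0 c_lt alpha_gt0 eta1_gt0 eta_incr eta_lt1 j.
rewrite ltnS leq_eqVlt => /orP[/eqP->|]; first by rewrite eta_thresholds_last qext_last.
exact: (scaled_thresholds_increasing (Q := Qz) c_gt0 alpha_gt0 (qext0 _ _ _)
  eta_thresholdsE eta_thresholds_last eta1_gt0 eta_incr eta_lt1).
Qed.

End EtaThresholds.

Lemma rank_fun_count_scaled (R : realType) (b e : R) a q r (Q : nat -> R) d :
  rank_fun b a q r ->
  (forall j, (j < a.+1)%N -> qext b a q j < qext b a q j.+1) ->
  0 < e -> (forall j, (j <= a)%N -> Q j = e * qext b a q j) ->
  - b <= d <= b -> r d = rank_count Q a (e * d).
Proof.
move=> r_rank Q_incr e_gt0 QE db; rewrite (rank_fun_count r_rank Q_incr db).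
by rewrite -(rank_countZ _ _ _ e_gt0); apply: eq_rank_count => j /QE.
Qed.

Section Violation.
Variables (R : realType) (T : Type) (m p : nat).
Variables (g : 'I_m -> T -> R) (h : 'I_p -> T -> R) (delta : R).

Lemma vineq_ge0 (gi : T -> R) x : 0 <= vineq gi x.
Proof. by rewrite /vineq le_max lexx orbT. Qed.

Lemma veq_ge0 (hj : T -> R) x : 0 <= veq delta hj x.
Proof. by rewrite /veq le_max lexx orbT. Qed.

Lemma vtheta_ge0 x : 0 <= vtheta g h delta x.
Proof. by rewrite addr_ge0 // sumr_ge0 // => i _; rewrite (vineq_ge0, veq_ge0). Qed.

Lemma card_set_gt0 (I : finType) (P : pred I) :
  (0 < #|[set i | P i]|)%N = has P (index_enum I).
Proof.
apply/card_gt0P/hasP => [[i]|[i _ Pi]]; first by rewrite inE; exists i.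
by exists i; rewrite inE.
Qed.

Lemma rho_gt0 x : (0 < rho g h delta x)%N = (vtheta g h delta x != 0).
Proof.
rewrite /rho /vtheta addn_gt0 !card_set_gt0 paddr_eq0 ?sumr_ge0 // => [|i _|i _];
  rewrite ?(vineq_ge0, veq_ge0) //.
by rewrite negb_and !psumr_neq0 // => i _; rewrite (vineq_ge0, veq_ge0).
Qed.

End Violation.

Lemma box_compact (R : realType) k (lo hi : 'I_k -> R) : compact (box lo hi).
Proof.
have := rV_compact (fun i => @segment_compact R (lo i) (hi i)).
by congr compact; apply/funext => v; apply/propext; split=> + i => /(_ i); rewrite /= in_itv.
Qed.

Lemma continuous_compact_bounds (R : realType) (T : topologicalType) (A : set T)
    (F : T -> R) x :
  compact A -> {within A, continuous F} -> A x -> minS A F <= F x <= maxS A F.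
Proof.
move=> A_compact F_cont Ax.
have [M [_ FM]] := compact_bounded (continuous_compact F_cont A_compact).
have FM1 y : (F @` A) y -> - (M + 1) <= y <= M + 1.
  by rewrite -ler_norml; apply: FM; rewrite ltrDl.
have ub : has_ubound (F @` A) by exists (M + 1) => y /FM1 /andP[].
have lb : has_lbound (F @` A) by exists (- (M + 1)) => y /FM1 /andP[].
have FAx : (F @` A) (F x) by exists x.
by rewrite (ge_inf lb FAx) (ub_le_sup ub FAx).
Qed.

(* [sup] of a set without upper bound is [0], so [0 < maxS A F] already bounds [F] on [A]. *)
Lemma le_maxS (R : realType) (T : Type) (A : set T) (F : T -> R) x :
  0 < maxS A F -> A x -> F x <= maxS A F.
Proof.
move=> max_gt0 Ax; apply: ub_le_sup; last by exists x.
apply: contrapT => unbounded; move: max_gt0.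
by rewrite /maxS sup_out ?ltxx // => -[].
Qed.

Lemma pi_fun_sub (R : realType) (T : Type) (f : T -> R) m p (g : 'I_m -> T -> R)
    (h : 'I_p -> T -> R) delta D V xi x1 x2 :
  D != 0 -> xi != 0 -> V != 0 ->
  let vt := vtheta g h delta in
  pi_fun f g h delta D V xi x1 - pi_fun f g h delta D V xi x2 =
  - (D / (xi * V) * (xi * V / D * (f x1 - f x2) + (theta V vt x1 - theta V vt x2)
                     + ((vt x1 != 0)%:R - (vt x2 != 0)%:R) * (xi * V))).
Proof.
move=> D0 xi0 V0 vt.
have sigmaE x :
    sigma g h delta D V xi x = (vt x != 0)%:R * D + D / (xi * V) * theta V vt x.
  by rewrite /sigma rho_gt0; case: (_ != 0); rewrite ?mul1r ?mul0r.
by rewrite /pi_fun !sigmaE; field; rewrite D0 xi0 V0.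
Qed.

Lemma order_cases_of_sub (R : realDomainType) (P1 P2 t u z W : R) (phi : int) :
  0 < t -> P1 - P2 = - (t * W) ->
  [/\ phi < 0 -> W < 0, 0 < phi -> 0 < W & phi = 0 -> W = u + z] ->
  [/\ (phi < 0 -> P1 > P2), (phi > 0 -> P1 < P2), (phi = 0 -> z = - u -> P1 = P2),
      (phi = 0 -> z < - u -> P1 > P2) & (phi = 0 -> z > - u -> P1 < P2)].
Proof.
move=> t_gt0 P12 [W_lt0 W_gt0 WE].
have lt21 : W < 0 -> P2 < P1 by move=> ?; rewrite -subr_gt0 P12 oppr_gt0 pmulr_rlt0.
have lt12 : 0 < W -> P1 < P2 by move=> ?; rewrite -subr_lt0 P12 oppr_lt0 pmulr_rgt0.
split=> [/W_lt0/lt21|/W_gt0/lt12|/WE W_uz zu|/WE W_uz zu|/WE W_uz zu] //.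
- by apply/eqP; rewrite -subr_eq0 P12 W_uz zu addrN mulr0 oppr0.
- by apply: lt21; rewrite W_uz; lra.
- by apply: lt12; rewrite W_uz; lra.
Qed.

Section PenaltySign.
Variables (R : realType) (V c : R) (a : nat) (q : nat -> R) (rz : R -> int).
Hypotheses (c_le_V : c <= V) (rz_rank : rank_fun (2 * V) a.+1 q rz).
Local Notation Q := (qext (2 * V) a.+1 q).
Hypotheses (Q_incr : forall j, (j < a.+2)%N -> Q j < Q j.+1) (Q_last : Q a.+1 = c).

Lemma rank_fun_lt_last z : - (2 * V) <= z < - c -> rz z = - (a.+2)%:Z.
Proof.
by move=> zb; apply: (rz_rank.2 a.+2 z _).2; rewrite ?leqnn // [a.+2.-1]/= qext_last Q_last.
Qed.

Lemma rank_fun_gt_last z : c < z <= 2 * V -> rz z = (a.+2)%:Z.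
Proof.
by move=> zb; apply: (rz_rank.2 a.+2 z _).1; rewrite ?leqnn // [a.+2.-1]/= qext_last Q_last.
Qed.

Variables (T : Type) (vt : T -> R) (x1 x2 : T) (u : R).
Hypotheses (vt1 : 0 <= vt x1 <= V) (vt2 : 0 <= vt x2 <= V) (u_bound : - c <= u <= c).
Let z := theta V vt x1 - theta V vt x2.
Let W := u + z + ((vt x1 != 0)%:R - (vt x2 != 0)%:R) * c.
Let phi := rank_count Q a u + rz z.

Lemma penalty_sign : [/\ phi < 0 -> W < 0, 0 < phi -> 0 < W & phi = 0 -> W = u + z].
Proof.
have /andP[ru_lo ru_hi] := rank_count_bounded Q a u.
have theta_bound x : 0 <= vt x <= V -> - V <= theta V vt x <= V.
  by rewrite /theta; case: eqP => _ /andP[]; lra.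
have z_bound : - (2 * V) <= z <= 2 * V.
  by move: (theta_bound _ vt1) (theta_bound _ vt2); rewrite /z; lra.
have phiE : phi = rank_count Q a.+1 u + rank_count Q a.+1 z.
  rewrite /phi (rank_fun_count rz_rank Q_incr z_bound).
  by rewrite (rank_count_recr (d := u)) ?Q_last.
have [/andP[v1_ge0 v1_le] /andP[v2_ge0 v2_le]] := (vt1, vt2).
(* [lra] only uses hypotheses of the local context *)
have [/andP[u_lo u_hi] c_le_V'] := (u_bound, c_le_V).
case: (eqVneq (vt x1) 0) => v1; case: (eqVneq (vt x2) 0) => v2.
- have WE : W = u + z by rewrite /W v1 v2 subrr mul0r addr0.
  by rewrite WE phiE; split=> [/rank_count_addr_lt0|/rank_count_addr_gt0|].
- have v2_gt0 : 0 < vt x2 by rewrite lt_def v2.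
  have zE : z = - V - vt x2 by rewrite /z /theta v1 eqxx (negbTE v2).
  have WE : W = u + z - c by rewrite /W v1 eqxx v2 /= mulr0n mulr1n sub0r mulN1r.
  have phi_lt0 : phi < 0.
    rewrite /phi rank_fun_lt_last; last by rewrite zE; apply/andP; split; lra.
    by rewrite subr_lt0 (le_lt_trans ru_hi) // ltz_nat.
  split=> [_|/(lt_trans phi_lt0)|phi0]; [by rewrite WE zE; lra | by rewrite ltxx |].
  by rewrite phi0 ltxx in phi_lt0.
- have v1_gt0 : 0 < vt x1 by rewrite lt_def v1.
  have zE : z = vt x1 + V by rewrite /z /theta v2 eqxx (negbTE v1) opprK.
  have WE : W = u + z + c by rewrite /W v2 eqxx v1 /= mulr0n mulr1n subr0 mul1r.
  have phi_gt0 : 0 < phi.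
    rewrite /phi rank_fun_gt_last; last by rewrite zE; apply/andP; split; lra.
    by rewrite -ltrBlDr sub0r (lt_le_trans _ ru_lo) // ltrN2 ltz_nat.
  split=> [/(lt_trans phi_gt0)|_|phi0]; [by rewrite ltxx | by rewrite WE zE; lra |].
  by rewrite phi0 ltxx in phi_gt0.
- have WE : W = u + z by rewrite /W v1 v2 subrr mul0r addr0.
  by rewrite WE phiE; split=> [/rank_count_addr_lt0|/rank_count_addr_gt0|].
Qed.

End PenaltySign.

Theorem lemma10 (R : realType) (k m p : nat) (lo hi : 'I_k -> R)
  (f : 'rV[R]_k -> R) (g : 'I_m -> 'rV[R]_k -> R) (h : 'I_p -> 'rV[R]_k -> R)
  (delta xi : R) (alpha : nat) (eta : nat -> R) (ry rz : R -> int) :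
  (forall i, lo i <= hi i) ->
  {within box lo hi, continuous f} ->
  (forall i, {within box lo hi, continuous (g i)}) ->
  (forall j, {within box lo hi, continuous (h j)}) ->
  0 < delta ->
  let S := box lo hi in
  let D := maxS S f - minS S f in
  let V := maxS S (vtheta g h delta) in
  0 < D -> 0 < V -> 0 < xi <= 1 ->
  (1 <= alpha)%N ->
  0 < eta 1%N -> (forall j, (1 <= j < alpha)%N -> eta j < eta j.+1) -> eta alpha < 1 ->
  rank_fun D alpha (fun j => eta j * D) ry ->
  rank_fun (2 * V) alpha.+1
    (fun j => if j == alpha.+1 then xi * V else eta j * (xi * V)) rz ->
  forall x1 x2, S x1 -> S x2 ->
  let pi := pi_fun f g h delta D V xi in
  let y := f x1 - f x2 in
  let z := theta V (vtheta g h delta) x1 - theta V (vtheta g h delta) x2 in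
  let phi := ry y + rz z in
  let e := xi * V / D in
  [/\ (phi < 0 -> pi x1 > pi x2),
      (phi > 0 -> pi x1 < pi x2),
      (phi = 0 -> z = - (e * y) -> pi x1 = pi x2),
      (phi = 0 -> z < - (e * y) -> pi x1 > pi x2)
    & (phi = 0 -> z > - (e * y) -> pi x1 < pi x2)].
Proof.
move=> _ f_cont _ _ _ S D V D_gt0 V_gt0 /andP[xi_gt0 xi_le1] alpha_gt0 eta1_gt0 eta_incr
  eta_lt1 ry_rank rz_rank x1 x2 Sx1 Sx2 pi y z phi e.
have c_gt0 : 0 < xi * V by rewrite mulr_gt0.
have c_le_V : xi * V <= V by rewrite ler_piMl // ltW.
have e_gt0 : 0 < e by rewrite divr_gt0.
pose Qz :=
  qext (2 * V) alpha.+1 (fun j => if j == alpha.+1 then xi * V else eta j * (xi * V)).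
have Qy_incr := scaled_thresholds_increasing D_gt0 alpha_gt0 (qext0 _ _ _)
  (fun j => @qextE _ _ _ _ j) (qext_last _ _ _) eta1_gt0 eta_incr eta_lt1.
have c_lt_2V : xi * V < 2 * V by rewrite (le_lt_trans c_le_V) // ltr_pMl ?ltr1n.
have Qz_incr : forall j, (j < alpha.+2)%N -> Qz j < Qz j.+1 :=
  eta_thresholds_increasing c_gt0 c_lt_2V alpha_gt0 eta1_gt0 eta_incr eta_lt1.
have S_compact : compact S by apply: box_compact.
have [/andP[f1_lo f1_hi] /andP[f2_lo f2_hi]] :=
  (continuous_compact_bounds S_compact f_cont Sx1,
   continuous_compact_bounds S_compact f_cont Sx2).
have y_bound : - D <= y <= D by rewrite /y /D; apply/andP; split; lra.
have ry_y : ry y = rank_count Qz alpha (e * y).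
  apply: (rank_fun_count_scaled ry_rank Qy_incr e_gt0 _ y_bound) => -[|j] j_le.
    by rewrite qext0 mulr0.
  by rewrite /Qz eta_thresholdsE // qextE // /e; field; rewrite gt_eqF.
have eD : e * D = xi * V by rewrite /e divfK ?gt_eqF.
have ey_bound : - (xi * V) <= e * y <= xi * V by rewrite -eD -mulrN !ler_pM2l.
have vt_bound x : S x -> 0 <= vtheta g h delta x <= V.
  by move=> Sx; rewrite vtheta_ge0 le_maxS.
have := penalty_sign c_le_V rz_rank Qz_incr (eta_thresholds_last _ _ _ _)
  (vt_bound _ Sx1) (vt_bound _ Sx2) ey_bound.
rewrite -ry_y => signs; apply: order_cases_of_sub signs; last first.
  exact: pi_fun_sub (lt0r_neq0 D_gt0) (lt0r_neq0 xi_gt0) (lt0r_neq0 V_gt0).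
by rewrite divr_gt0.
Qed.
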